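(* Let $R$ be an associative ring with unity, $\sigma$ an endomorphism of $R$ and $\delta$ a $\sigma$-derivation of $R$. Assume that $Re$ is $(\sigma,\delta)$-stable for all $e\in\mathcal{S}_\ell(R)$ and that $R$ satisfies the condition $(\mathcal{C}_\sigma)$. If $R$ is right p.q.-Baer, then the Ore extension $R[x;\sigma,\delta]$ is right p.q.-Baer.
   Context: A $\sigma$-derivation is an additive map $\delta$ with $\delta(ab)=\sigma(a)\delta(b)+\delta(a)b$. $R[x;\sigma,\delta]$ is the ring of polynomials $\sum a_ix^i$ ($a_i\in R$, coefficients on the left) with multiplication determined by that of $R$ and $xa=\sigma(a)x+\delta(a)$. $\mathcal{S}_\ell(R)$ is the set of idempotents $e$ with $ere=re$ for all $r\in R$. A subset $X$ is $(\sigma,\delta)$-stable if $\sigma(X)\subseteq X$ and $\delta(X)\subseteq X$. $R$ satisfies $(\mathcal{C}_\sigma)$ if $a\sigma(b)=0$ implies $ab=0$ for all $a,b\in R$. A ring $T$ is right p.q.-Baer if the right annihilator $r_T(aT)=\{t\in T\mid aTt=0\}$ of every principal right ideal $aT$ is generated (as a right ideal) by an idempotent. *)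

From HB Require Import structures.
From mathcomp Require Import all_boot all_order all_algebra.
Set Implicit Arguments. Unset Strict Implicit. Unset Printing Implicit Defensive.
Import GRing.Theory.
Local Open Scope ring_scope.

Definition sigma_derivation (R : nzRingType) (sigma : R -> R) (delta : {additive R -> R}) : Prop :=
  forall a b : R, delta (a * b) = sigma a * delta b + delta a * b.

(* Elements of R[x;sigma,delta] are represented by {poly R}: sum_i a_i x^i,
   coefficients on the left. Addition is that of {poly R}; multiplication is
   the Ore multiplication defined below. *)

(* left multiplication by x: x * (sum a_i x^i) = sum (sigma(a_i) x^(i+1) + delta(a_i) x^i) *)
Definition ore_xmul (R : nzRingType) (sigma delta : R -> R) (q : {poly R}) : {poly R} :=
  \poly_(i < size q) sigma q`_i * 'X + \poly_(i < size q) delta q`_i.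

Definition ore_mul (R : nzRingType) (sigma delta : R -> R) (p q : {poly R}) : {poly R} :=
  \sum_(i < size p) (p`_i)%:P * iter i (ore_xmul sigma delta) q.

Definition left_semicentral (R : nzRingType) (e : R) : Prop :=
  e * e = e /\ forall r : R, e * r * e = r * e.

Definition Re_stable (R : nzRingType) (sigma delta : R -> R) (e : R) : Prop :=
  (forall r : R, exists r' : R, sigma (r * e) = r' * e) /\
  (forall r : R, exists r' : R, delta (r * e) = r' * e).

Definition cond_C (R : nzRingType) (sigma : R -> R) : Prop :=
  forall a b : R, a * sigma b = 0 -> a * b = 0.

Definition right_pqBaer (T : Type) (mul : T -> T -> T) (zero : T) : Prop :=
  forall a : T, exists e : T, mul e e = e /\
    forall t : T, (forall s : T, mul (mul a s) t = zero) <-> exists s : T, t = mul e s.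

(* Let [e] be the left semicentral idempotent with [r_R(f_0 R + ... + f_n R) = e R];
   we show [r_T(f T) = e T] for [T = R[x;sigma,delta]].  Stability of [R e] makes
   [e R] stable as well, so every product [h (e w)] has its coefficients in [e R],
   where the coefficients of [f] vanish.  Conversely [f T t = 0] forces
   [f_i R t_j = 0] for all [i, j]: the top coefficient of [f r t] is
   [f_n sigma^n (r t_m)], and (C_sigma) strips the powers of [sigma]; then [t] is
   split along the idempotent of [r(f_n R)] and both halves fall to induction. *)

From HB Require Import structures.
From mathcomp Require Import all_boot all_order all_algebra.
Import GRing.Theory.
Local Open Scope ring_scope.

Section OreExtension.
#[local] Set Implicit Arguments.
#[local] Unset Strict Implicit.

Variable R : nzRingType.

Lemma iter_rmorphM (s : {rmorphism R -> R}) k (a b : R) :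
  iter k s (a * b) = iter k s a * iter k s b.
Proof. by elim: k => //= k ->; rewrite rmorphM. Qed.

Lemma iter_cond_C (s : R -> R) : cond_C s ->
  forall k (a b : R), a * iter k s b = 0 -> a * b = 0.
Proof. by move=> hC k; elim: k => [|k IHk] a b //; rewrite iterSr => /IHk /hC. Qed.

Section IdempotentAnnihilators.

Lemma fixed_left_ideal_semicentral (e : R) (Q : R -> Prop) :
  e * e = e -> (forall b, Q b <-> e * b = b) ->
  (forall r b, Q b -> Q (r * b)) -> left_semicentral e.
Proof. by move=> he hQ hL; split=> // r; rewrite -mulrA; apply/hQ/hL/hQ. Qed.

Hypothesis hR : right_pqBaer (@GRing.mul R) 0.

Lemma pqBaer_rann (a : R) : exists e, left_semicentral e /\
  forall b, (forall r, a * r * b = 0) <-> e * b = b.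
Proof.
have [e [he hae]] := hR a.
have fixed b : (forall r, a * r * b = 0) <-> e * b = b.
  split=> [/hae [w ->] | <-]; first by rewrite mulrA he.
  by apply/hae; exists b.
exists e; split=> //; apply: (fixed_left_ideal_semicentral he fixed).
by move=> r b hb r'; rewrite mulrA -(mulrA a) hb.
Qed.

Lemma pqBaer_rann_finite (a : nat -> R) n : exists e, left_semicentral e /\
  forall b, (forall i, (i < n)%N -> forall r, a i * r * b = 0) <-> e * b = b.
Proof.
elim: n => [|n [e0 [[he0 ls0] h0]]].
  by exists 1; split=> [|b]; [split=> [|r]; rewrite ?mulr1 ?mul1r | rewrite mul1r].
have [e1 [[he1 ls1] h1]] := pqBaer_rann (a n).
exists (e0 * e1); split.
  split=> [|r].
    have -> : e0 * e1 * (e0 * e1) = e0 * (e1 * e0 * e1) by rewrite !mulrA.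
    by rewrite ls1 mulrA he0.
  have -> : e0 * e1 * r * (e0 * e1) = e0 * (e1 * (r * e0) * e1) by rewrite !mulrA.
  by rewrite ls1 !mulrA ls0.
move=> b; split=> [H | hb].
  have hb1 : e1 * b = b by apply/h1 => r; exact: H n (ltnSn n) r.
  have hb0 : e0 * b = b by apply/h0 => i hi; apply: H; exact: ltnW.
  by rewrite -mulrA hb1 hb0.
have hb1 : e1 * b = b by rewrite -hb !mulrA ls1.
have hb0 : e0 * b = b by rewrite -hb !mulrA he0.
move=> i; rewrite ltnS leq_eqVlt => /predU1P [-> | hi]; first exact/h1.
exact: (proj2 (h0 b) hb0 i hi).
Qed.

End IdempotentAnnihilators.

Lemma Re_stable_closed (s d : R -> R) (e : R) : e * e = e -> Re_stable s d e ->
  forall b, b * e = b -> s b * e = s b /\ d b * e = d b.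
Proof.
move=> he [hs hd] b hb; have [r1 h1] := hs b; have [r2 h2] := hd b.
by rewrite hb in h1 h2; rewrite h1 h2 -!mulrA he.
Qed.

(* Stability applied to [1 * e] puts [sigma e] and [delta e] in [R e], which the
   semicentral [e] absorbs from the left. *)
Lemma eR_stable_closed (s : {rmorphism R -> R}) (d : {additive R -> R}) (e : R) :
  sigma_derivation s d -> left_semicentral e -> Re_stable s d e ->
  forall b, e * b = b -> e * s b = s b /\ e * d b = d b.
Proof.
move=> hd [he ls] [hs1 hs2] b hb.
have [r1 h1] := hs1 1; have [r2 h2] := hs2 1; rewrite mul1r in h1 h2.
have E1 : s b = r1 * e * s b by rewrite -h1 -rmorphM hb.
have E2 : d b = r1 * e * d b + r2 * e * b by rewrite -h1 -h2 -hd hb.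
split; first by rewrite E1 !mulrA ls.
by rewrite E2 mulrDr !mulrA !ls.
Qed.

Section OreMultiplication.
Context {s d : R -> R}.
Local Notation xmul := (ore_xmul s d).
Local Notation omul := (ore_mul s d).

Lemma ore_mul_widen N (p q : {poly R}) : (size p <= N)%N ->
  omul p q = \sum_(i < N) (p`_i)%:P * iter i xmul q.
Proof.
move=> hN; rewrite /ore_mul (big_ord_widen _ (fun i => (p`_i)%:P * iter i xmul q) hN).
rewrite big_mkcond; apply: eq_bigr => i _; case: ifP => // h.
by rewrite nth_default ?mul0r // leqNgt h.
Qed.

Lemma ore_mul0l (q : {poly R}) : omul 0 q = 0.
Proof. by rewrite /ore_mul size_poly0 big_ord0. Qed.

Lemma ore_mulDl (p q r : {poly R}) : omul (p + q) r = omul p r + omul q r.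
Proof.
have hpq : (size (p + q)%R <= size p + size q)%N.
  by apply: leq_trans (size_polyD _ _) _; rewrite geq_max leq_addr leq_addl.
rewrite (ore_mul_widen _ hpq) (ore_mul_widen _ (leq_addr (size q) (size p))).
rewrite (ore_mul_widen _ (leq_addl (size p) (size q))) -big_split.
by apply: eq_bigr => i _; rewrite coefD polyCD mulrDl.
Qed.

Lemma ore_mulCl (c : R) (p q : {poly R}) : omul (c%:P * p) q = c%:P * omul p q.
Proof.
have hcp : (size (c%:P * p)%R <= size p)%N.
  by apply/leq_sizeP => j hj; rewrite coefCM nth_default ?mulr0.
rewrite (ore_mul_widen _ hcp) (ore_mul_widen _ (leqnn _)) mulr_sumr.
by apply: eq_bigr => i _; rewrite coefCM polyCM mulrA.
Qed.

Lemma ore_mul_polyC (c : R) (q : {poly R}) : omul c%:P q = c%:P * q.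
Proof. by rewrite (ore_mul_widen _ (size_polyC_leq1 c)) big_ord1 coefC. Qed.

Lemma ore_mul_Xn n (q : {poly R}) : omul 'X^n q = iter n xmul q.
Proof.
rewrite (ore_mul_widen _ (leqnn (size 'X^n))) size_polyXn big_ord_recr /=.
rewrite big1 => [|i _]; last by rewrite coefXn ltn_eqF // polyC0 mul0r.
by rewrite add0r coefXn eqxx mul1r.
Qed.

Lemma ore_mul_eq0 (f u : {poly R}) :
  (forall i j, f`_i * (iter i xmul u)`_j = 0) -> omul f u = 0.
Proof.
move=> h; apply/polyP => j; rewrite /ore_mul coef_sum coef0.
by rewrite big1 // => i _; rewrite coefCM h.
Qed.

Lemma ore_mul_drop_lead n (f u : {poly R}) : (size f <= n.+1)%N ->
  (forall j, f`_n * (iter n xmul u)`_j = 0) ->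
  omul f u = omul (\poly_(i < n) f`_i) u.
Proof.
move=> hf h; rewrite (ore_mul_widen _ hf) (ore_mul_widen _ (size_poly _ _)).
rewrite big_ord_recr /=.
have -> : (f`_n)%:P * iter n xmul u = 0 by apply/polyP => j; rewrite coefCM h coef0.
by rewrite addr0; apply: eq_bigr => i _; rewrite coef_poly ltn_ord.
Qed.

End OreMultiplication.

Section OreMorphism.
Variables (sigma : {rmorphism R -> R}) (delta : {additive R -> R}).
Local Notation xmul := (ore_xmul sigma delta).
Local Notation omul := (ore_mul sigma delta).

Lemma coef_ore_xmul (q : {poly R}) j :
  (xmul q)`_j = (if j is j'.+1 then sigma q`_j' else 0) + delta q`_j.
Proof.
rewrite /ore_xmul coefD coefMX !coef_poly.
have E (f : R -> R) k : f 0 = 0 -> (if (k < size q)%N then f q`_k else 0) = f q`_k.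
  by move=> f0; case: ltnP => // h; rewrite nth_default.
by case: j => [|j] /=; rewrite !E ?raddf0 ?rmorph0.
Qed.

Lemma size_ore_xmul (q : {poly R}) : (size (xmul q) <= (size q).+1)%N.
Proof.
apply/leq_sizeP => [[|j]] // hj; rewrite coef_ore_xmul.
by rewrite !nth_default ?rmorph0 ?raddf0 ?addr0 //; apply: leq_trans hj.
Qed.

Lemma ore_xmulD (p q : {poly R}) : xmul (p + q) = xmul p + xmul q.
Proof.
apply/polyP => [[|j]]; rewrite coefD !coef_ore_xmul !coefD !raddfD ?add0r //.
by rewrite addrACA.
Qed.

Lemma ore_xmul0 : xmul 0 = 0.
Proof. by apply/polyP => [[|j]]; rewrite coef_ore_xmul !coef0 ?rmorph0 raddf0 addr0. Qed.

Lemma size_iter_ore_xmul k (q : {poly R}) : (size (iter k xmul q) <= size q + k)%N.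
Proof.
elim: k => [|k IHk] /=; first by rewrite addn0.
by apply: leq_trans (size_ore_xmul _) _; rewrite addnS ltnS.
Qed.

Lemma coef_iter_ore_xmul_lead k m (q : {poly R}) : (size q <= m.+1)%N ->
  (iter k xmul q)`_(m + k) = iter k sigma q`_m.
Proof.
move=> hq; elim: k => [|k IHk] /=; first by rewrite addn0.
have hk : (size (iter k xmul q) <= (m + k).+1)%N.
  by apply: leq_trans (size_iter_ore_xmul k q) _; rewrite -addSn leq_add2r.
by rewrite addnS coef_ore_xmul IHk (nth_default _ hk) raddf0 addr0.
Qed.

Lemma ore_mul_lead n m (p q : {poly R}) :
  (size p <= n.+1)%N -> (size q <= m.+1)%N ->
  (size (omul p q) <= (n + m).+1)%N /\ (omul p q)`_(n + m) = p`_n * iter n sigma q`_m.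
Proof.
move=> hp hq; rewrite (ore_mul_widen _ hp); split.
  apply/leq_sizeP => j hj; rewrite coef_sum big1 // => -[i /= hi] _.
  have hij : (size (iter i xmul q) <= j)%N.
    apply: leq_trans (size_iter_ore_xmul i q) (leq_trans _ hj).
    by rewrite -addnS addnC leq_add // -ltnS.
  by rewrite coefCM (nth_default _ hij) mulr0.
rewrite coef_sum big_ord_recr /= big1 ?add0r => [|[i /= hi] _].
  by rewrite coefCM addnC coef_iter_ore_xmul_lead.
have hin : (size (iter i xmul q) <= n + m)%N.
  apply: leq_trans (size_iter_ore_xmul i q) (leq_trans (leq_add hq (leqnn i)) _).
  by rewrite addSn -addnS addnC leq_add2r.
by rewrite coefCM (nth_default _ hin) mulr0.
Qed.

Section CoefClosure.
Variable P : R -> Prop.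
Hypotheses (P0 : P 0) (PD : forall a b, P a -> P b -> P (a + b)).
Hypotheses (Psigma : forall b, P b -> P (sigma b)) (Pdelta : forall b, P b -> P (delta b)).

Lemma coef_iter_ore_xmul_closed k (q : {poly R}) :
  (forall j, P q`_j) -> forall j, P (iter k xmul q)`_j.
Proof.
move=> hq; elim: k => //= k IHk [|j]; rewrite coef_ore_xmul; apply: PD; auto.
Qed.

Hypothesis PM : forall r b, P b -> P (r * b).

Lemma coef_ore_mul_closed (p q : {poly R}) :
  (forall j, P q`_j) -> forall j, P (omul p q)`_j.
Proof.
move=> hq j; rewrite /ore_mul coef_sum; apply: (big_ind P) => // i _.
by rewrite coefCM; apply/PM/coef_iter_ore_xmul_closed.
Qed.

End CoefClosure.

Lemma coef_ore_mul_Re (e : R) : e * e = e -> Re_stable sigma delta e ->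
  forall p q : {poly R}, (forall j, q`_j * e = q`_j) ->
  forall j, (omul p q)`_j * e = (omul p q)`_j.
Proof.
move=> he hs p q; apply: (@coef_ore_mul_closed (fun x => x * e = x)).
- by rewrite mul0r.
- by move=> a b ha hb; rewrite mulrDl ha hb.
- by move=> b /(Re_stable_closed he hs) [].
- by move=> b /(Re_stable_closed he hs) [].
- by move=> r b hb; rewrite -mulrA hb.
Qed.

Hypothesis hdelta : sigma_derivation sigma delta.

Lemma coef_ore_mul_eR (e : R) : left_semicentral e -> Re_stable sigma delta e ->
  forall p q : {poly R}, (forall j, e * q`_j = q`_j) ->
  forall j, e * (omul p q)`_j = (omul p q)`_j.
Proof.
move=> hls hs p q; apply: (@coef_ore_mul_closed (fun x => e * x = x)).
- by rewrite mulr0.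
- by move=> a b ha hb; rewrite mulrDr ha hb.
- by move=> b /(eR_stable_closed hdelta hls hs) [].
- by move=> b /(eR_stable_closed hdelta hls hs) [].
- by case: hls => _ ls r b hb; rewrite -hb !mulrA ls -mulrA hb.
Qed.

Lemma ore_xmulCl (c : R) (q : {poly R}) :
  xmul (c%:P * q) = (sigma c)%:P * xmul q + (delta c)%:P * q.
Proof.
apply/polyP => [[|j]]; rewrite coef_ore_xmul coefD !coefCM coef_ore_xmul hdelta.
  by rewrite !add0r.
by rewrite rmorphM mulrDr !addrA.
Qed.

Lemma ore_mulXl (u q : {poly R}) : omul (xmul u) q = xmul (omul u q).
Proof.
rewrite (ore_mul_widen _ (size_ore_xmul u)) (ore_mul_widen _ (leqnn _)).
rewrite (big_morph xmul ore_xmulD ore_xmul0).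
under [LHS]eq_bigr do rewrite coef_ore_xmul polyCD mulrDl.
under [RHS]eq_bigr do rewrite ore_xmulCl.
rewrite !big_split /=; congr (_ + _).
  by rewrite big_ord_recl /= mul0r add0r.
by rewrite big_ord_recr /= nth_default // raddf0 mul0r addr0.
Qed.

Lemma ore_mulA (p q r : {poly R}) : omul (omul p q) r = omul p (omul q r).
Proof.
have -> : omul p q = \sum_(i < size p) (p`_i)%:P * iter i xmul q by [].
rewrite (big_morph (omul^~ r) (fun x y => ore_mulDl x y r) (ore_mul0l r)).
apply: eq_bigr => i _; rewrite ore_mulCl; congr (_ * _).
by elim: (nat_of_ord i) => //= k <-; rewrite ore_mulXl.
Qed.

Definition ore_rann (f t : {poly R}) := forall h, omul (omul f h) t = 0.

Lemma ore_rann_mulCr (c : R) (f t : {poly R}) :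
  ore_rann f t -> ore_rann f (c%:P * t).
Proof. by move=> Hft h; rewrite -(ore_mul_polyC (s := sigma) (d := delta)) -ore_mulA (ore_mulA f h). Qed.

Hypothesis hC : cond_C sigma.

Lemma ore_rann_lead_coef n m (f t : {poly R}) :
  (size f <= n.+1)%N -> (size t <= m.+1)%N -> ore_rann f t ->
  forall r, f`_n * r * t`_m = 0.
Proof.
move=> hf ht Hft r.
have [size_fr coef_fr] := ore_mul_lead hf (size_polyC_leq1 r).
rewrite addn0 in size_fr coef_fr.
have [_ coef_frt] := ore_mul_lead size_fr ht.
move/(congr1 (fun p : {poly R} => p`_(n + m))): (Hft r%:P).
rewrite coef_frt coef_fr coef0 coefC eqxx -mulrA -iter_rmorphM => /(iter_cond_C hC).
by rewrite mulrA.
Qed.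

(* The coefficients of [x^n h e] lie in [R e] by stability, so the leading term
   [f_n x^n] of [f] kills [h e]; and [e t = e (e t)]. *)
Lemma ore_rann_drop_lead n (e : R) (f t : {poly R}) : (size f <= n.+1)%N ->
  e * e = e -> Re_stable sigma delta e -> (forall r, f`_n * r * e = 0) ->
  ore_rann f t -> ore_rann (\poly_(i < n) f`_i) (e%:P * t).
Proof.
move=> hf he hs hfe Hft h.
have eet : e%:P * t = omul e%:P (e%:P * t) by rewrite ore_mul_polyC mulrA -polyCM he.
have eRe k : (e%:P)`_k * e = (e%:P)`_k.
  by rewrite coefC; case: (k == 0)%N; rewrite ?he ?mul0r.
have drop : omul f (omul h e%:P) = omul (\poly_(i < n) f`_i) (omul h e%:P).
  apply: ore_mul_drop_lead => // j; rewrite -ore_mul_Xn -ore_mulA.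
  by rewrite -(coef_ore_mul_Re he hs _ eRe) mulrA hfe.
rewrite eet -ore_mulA (ore_mulA _ h) -drop -(ore_mulA f) ore_mulA -eet.
exact: ore_rann_mulCr.
Qed.

Hypothesis hstable : forall e : R, left_semicentral e -> Re_stable sigma delta e.
Hypothesis hR : right_pqBaer (@GRing.mul R) 0.

(* Double induction on [size f] and [size t], with [e] the idempotent of
   [r(f_n R)]: the top coefficients give [e t_m = t_m], so [(1 - e) t] is shorter,
   while [e t] is annihilated by [f] with its leading term dropped. *)
Lemma coef_ore_rann (f t : {poly R}) :
  ore_rann f t -> forall i j r, f`_i * r * t`_j = 0.
Proof.
move: {2}(size f) (leqnn (size f)) => n; elim: n f t => [|n IHn] f t hf.
  by move=> _ i j r; rewrite nth_default ?mul0r // (leq_trans hf).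
have [e [[he ls] hae]] := pqBaer_rann hR f`_n.
have hs := hstable (conj he ls).
have hfe r : f`_n * r * e = 0 by move: r; apply/hae.
move: {2}(size t) (leqnn (size t)) => m; elim: m t => [|m IHm] t ht Hft.
  by move=> i j r; rewrite (nth_default _ (leq_trans ht (leq0n j))) mulr0.
have hem : e * t`_m = t`_m by apply/hae; exact: ore_rann_lead_coef hf ht Hft.
have size_t' : (size ((1 - e)%:P * t)%R <= m)%N.
  apply/leq_sizeP => j; rewrite leq_eqVlt coefCM => /predU1P [<- | hj].
    by rewrite mulrBl mul1r hem subrr.
  by rewrite nth_default ?mulr0 // (leq_trans ht).
have I1 := IHn _ _ (size_poly _ _) (ore_rann_drop_lead hf he hs hfe Hft).
have I2 := IHm _ size_t' (ore_rann_mulCr (1 - e) Hft).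
move=> i j r; have := I2 i j r.
rewrite coefCM mulrBl mul1r mulrBr => /subr0_eq ->.
have [hi | hi | ->] := ltngtP i n.
- by have := I1 i j r; rewrite coef_poly hi coefCM.
- by rewrite nth_default ?mul0r // (leq_trans hf hi).
- by rewrite mulrA hfe mul0r.
Qed.

Lemma ore_rann_semicentral (e : R) (f w : {poly R}) : left_semicentral e ->
  (forall i, f`_i * e = 0) -> ore_rann f (e%:P * w).
Proof.
move=> hls hfe h; have hs := hstable hls.
have ew : forall j, e * (e%:P * w)`_j = (e%:P * w)`_j.
  by case: hls => he _ j; rewrite coefCM mulrA he.
rewrite ore_mulA; apply: ore_mul_eq0 => i j.
by rewrite -ore_mul_Xn -ore_mulA -(coef_ore_mul_eR hls hs _ ew) mulrA hfe mul0r.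
Qed.

End OreMorphism.

End OreExtension.

Theorem proposition3p2 (R : nzRingType) (sigma : {rmorphism R -> R})
  (delta : {additive R -> R})
  (hdelta : sigma_derivation sigma delta)
  (hstable : forall e : R, left_semicentral e -> Re_stable sigma delta e)
  (hC : cond_C sigma)
  (hR : right_pqBaer (@GRing.mul R) 0) :
  right_pqBaer (ore_mul sigma delta) (0 : {poly R}).
Proof.
move=> f.
have [e [hls hfe]] := pqBaer_rann_finite hR (fun i => f`_i) (size f).
have [he _] := hls.
have hfe0 i : f`_i * e = 0.
  have [hi | hi] := ltnP i (size f); last by rewrite nth_default ?mul0r.
  by rewrite -[f`_i]mulr1; exact: (proj2 (hfe e) he i hi 1).
exists e%:P; split; first by rewrite ore_mul_polyC -polyCM he.
move=> t; split=> [Hft | [w ->]].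
  exists t; rewrite ore_mul_polyC; apply/polyP => j; rewrite coefCM.
  by apply/esym/hfe => i _ r; apply: (coef_ore_rann hdelta hC hstable hR Hft).
rewrite ore_mul_polyC; exact: ore_rann_semicentral.
Qed.
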